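(* Let $p$ be an odd prime, let $n=s=m=2$, and let $a,b,c,d,e,f\in\mathbb{Z}_p\setminus\{0\}$ be such that each of the pairs $(a,b)$, $(c,d)$, $(e,f)$ satisfies the quadratic reciprocity law. Put $k_s=k(a,b)$, $k_n=k(c,d)$, $k_m=k(e,f)$. Then $T_{RN}$ is invertible over $\mathbb{Z}_p$ if and only if, for some labelling $\{k_1,k_2,k_3\}=\{k_n,k_s,k_m\}$ (as a multiset), one of the following holds: (i) $k_1\equiv k_2\equiv k_3\pmod p$ and $p\ne3$; (ii) $k_1\equiv k_2\not\equiv k_3\pmod p$ and $k_3\not\equiv\pm2k_1\pmod p$; (iii) $k_1,k_2,k_3$ are pairwise distinct modulo $p$ and $k_3\not\equiv\pm(k_1+k_2)$ and $k_3\not\equiv\pm(k_1-k_2)\pmod p$.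
   Context: $\mathbb{Z}_p=\{0,1,\dots,p-1\}$ is the field with $p$ elements. For $k\ge1$ and $t_1,t_2\in\mathbb{Z}_p$, $S_k(t_1,t_2)$ is the $k\times k$ tridiagonal matrix with zeros on the main diagonal, every subdiagonal entry (positions $(i+1,i)$) equal to $t_1$, and every superdiagonal entry (positions $(i,i+1)$) equal to $t_2$. $I_r$ is the $r\times r$ identity and $\otimes$ the Kronecker product. $M_s=I_s\otimes S_n(c,d)+S_s(a,b)\otimes I_n$ and $T_{RN}=I_m\otimes M_s+S_m(f,e)\otimes I_{ns}$, with entries in $\mathbb{Z}_p$. A pair $(t_1,t_2)\in\mathbb{Z}_p\times\mathbb{Z}_p$ satisfies the quadratic reciprocity law if either $t_1=t_2$, or $t_1t_2\equiv t^2\pmod p$ for some $t\in\mathbb{Z}_p$ (for nonzero $t_1,t_2$: both are quadratic residues or both are non-residues). For such a pair, $k(t_1,t_2)=t_1$ if $t_1=t_2$, and otherwise $k(t_1,t_2)=\min\{t\in\{0,\dots,p-1\}: t^2\equiv t_1t_2\pmod p\}$. *)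

From HB Require Import structures.
From mathcomp Require Import all_boot all_order all_algebra.
Set Implicit Arguments. Unset Strict Implicit. Unset Printing Implicit Defensive.
Import GRing.Theory.
Local Open Scope ring_scope.

(* Index helpers for the Kronecker product: row index i of an (m*n)-sized
   matrix corresponds to the pair (i %/ n, i %% n). *)
Lemma kron_div_lt m n (i : 'I_(m * n)) : (i %/ n < m)%N.
Proof.
case: i => i /=; case: n => [|n]; first by rewrite muln0.
by move=> hi; rewrite ltn_divLR.
Qed.

Lemma kron_mod_lt m n (i : 'I_(m * n)) : (i %% n < n)%N.
Proof.
case: i => i /=; case: n => [|n]; first by rewrite muln0.
by move=> _; rewrite ltn_pmod.
Qed.

Definition kdiv m n (i : 'I_(m * n)) : 'I_m := Ordinal (kron_div_lt i).
Definition kmod m n (i : 'I_(m * n)) : 'I_n := Ordinal (kron_mod_lt i).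

Definition kron (R : pzRingType) m1 n1 m2 n2
  (A : 'M[R]_(m1, n1)) (B : 'M[R]_(m2, n2)) : 'M[R]_(m1 * m2, n1 * n2) :=
  \matrix_(i, j) (A (kdiv i) (kdiv j) * B (kmod i) (kmod j)).

Definition Smx (R : pzRingType) (k : nat) (t1 t2 : R) : 'M[R]_k :=
  \matrix_(i, j) (if val i == (val j).+1 then t1
                  else if val j == (val i).+1 then t2 else 0).

Definition Ms (R : pzRingType) (n s : nat) (a b c d : R) : 'M[R]_(s * n) :=
  kron (1%:M : 'M[R]_s) (Smx n c d) + kron (Smx s a b) (1%:M : 'M[R]_n).

Definition TRN (R : pzRingType) (n s m : nat) (a b c d e f : R)
  : 'M[R]_(m * (s * n)) :=
  kron (1%:M : 'M[R]_m) (Ms n s a b c d)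
  + kron (Smx m f e) (1%:M : 'M[R]_(s * n)).

Definition qrl (p : nat) (t1 t2 : 'F_p) : Prop :=
  t1 = t2 \/ exists t : 'F_p, t ^+ 2 = t1 * t2.

Definition kfun (p : nat) (t1 t2 : 'F_p) : nat :=
  if t1 == t2 then val t1
  else find (fun t : nat => (t%:R : 'F_p) ^+ 2 == t1 * t2) (iota 0 p).

Definition modF (p : nat) (k : nat) : 'F_p := k%:R.

(** The matrix [TRN 2 2 2 a b c d e f] is [X + Y + Z] with
    [X = 1 ⊗ 1 ⊗ S(c,d)], [Y = 1 ⊗ S(a,b) ⊗ 1], [Z = S(f,e) ⊗ 1 ⊗ 1]. These commute
    pairwise and, since [S_2(t1,t2)^2 = t1 t2], square to the scalars [cd], [ab],
    [ef]. Hence, if [kn^2 = cd], [ks^2 = ab], [km^2 = ef], the product of the four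
    sign variants [X ± Y ± Z] is the scalar
    [(kn+ks+km)(kn+ks-km)(kn-ks+km)(kn-ks-km)]. Conjugating by tensors of
    [diag(1,-1)] turns [X + Y + Z] into each sign variant, so all four are invertible
    together, and [TRN] is invertible iff that scalar is nonzero, i.e. iff no [k] is
    [± (sum or difference of the other two)]. Conditions (i)-(iii) are this
    condition split according to which of the [k]s coincide. *)

From HB Require Import structures.
From mathcomp Require Import all_boot all_order all_algebra.
From mathcomp Require Import ring mxtens.
Import GRing.Theory.
Local Open Scope ring_scope.
Set Implicit Arguments. Unset Strict Implicit. Unset Printing Implicit Defensive.

Lemma kron_tensmx (R : pzRingType) m1 n1 m2 n2
    (A : 'M[R]_(m1, n1)) (B : 'M[R]_(m2, n2)) : kron A B = A *t B.
Proof. by apply/matrixP => i j; rewrite !mxE; congr (A _ _ * B _ _); apply: val_inj. Qed.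

Lemma tensmxDr (R : pzRingType) m1 n1 m2 n2
    (A : 'M[R]_(m1, n1)) (B C : 'M[R]_(m2, n2)) : A *t (B + C) = A *t B + A *t C.
Proof. by apply/matrixP => i j; rewrite !mxE mulrDr. Qed.

Lemma tensmxNl (R : pzRingType) m1 n1 m2 n2
    (A : 'M[R]_(m1, n1)) (B : 'M[R]_(m2, n2)) : (- A) *t B = - (A *t B).
Proof. by apply/matrixP => i j; rewrite !mxE mulNr. Qed.

Lemma tensmxNr (R : pzRingType) m1 n1 m2 n2
    (A : 'M[R]_(m1, n1)) (B : 'M[R]_(m2, n2)) : A *t (- B) = - (A *t B).
Proof. by apply/matrixP => i j; rewrite !mxE mulrN. Qed.

Lemma scalar_tensmx (R : pzRingType) m n (a b : R) :
  (a%:M : 'M_m) *t (b%:M : 'M_n) = (a * b)%:M.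
Proof.
apply/matrixP => i j.
case: (mxtens_indexP i) => i1 i2; case: (mxtens_indexP j) => j1 j2.
rewrite tensmxE !mxE (inj_eq (can_inj (@mxtens_indexK _ _))) xpair_eqE.
by case: (i1 == j1); case: (i2 == j2); rewrite ?mulr1n ?mulr0n ?mulr0 ?mul0r.
Qed.

Lemma tensmx_conj (R : comPzRingType) m n (J A : 'M[R]_m) (K B : 'M[R]_n) :
  (J *t K) *m (A *t B) *m (J *t K) = (J *m A *m J) *t (K *m B *m K).
Proof. by rewrite !tensmx_mul. Qed.

Lemma TRN_tensE (R : pzRingType) n s m (a b c d e f : R) :
  TRN n s m a b c d e f =
  1%:M *t (1%:M *t Smx n c d) + 1%:M *t (Smx s a b *t 1%:M)
  + Smx m f e *t (1%:M *t 1%:M).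
Proof. by rewrite /TRN /Ms !kron_tensmx tensmxDr scalar_tensmx mulr1. Qed.

Definition sign_mx (R : pzRingType) k : 'M[R]_k := diag_mx (\row_(i < k) (-1) ^+ i).

Lemma sign_mx_sqr (R : pzRingType) k : sign_mx R k *m sign_mx R k = 1%:M.
Proof.
rewrite mulmx_diag -diag_const_mx; congr diag_mx.
by apply/rowP => i; rewrite !mxE -expr2 sqrr_sign.
Qed.

Lemma sign_mx_conj_Smx (R : pzRingType) k (t1 t2 : R) :
  sign_mx R k *m Smx k t1 t2 *m sign_mx R k = - Smx k t1 t2.
Proof.
apply/matrixP => i j; rewrite mul_mx_diag mul_diag_mx !mxE.
case: eqP => [->|_]; last case: eqP => [->|_]; last by rewrite mulr0 mul0r oppr0.
- rewrite -mulrA (commr_sign t1) mulrA -exprD addSn addnn.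
  by rewrite -signr_odd /= odd_double mulN1r.
- rewrite -mulrA (commr_sign t2) mulrA -exprD addnS addnn.
  by rewrite -signr_odd /= odd_double mulN1r.
Qed.

Lemma Smx2_sqr (R : comPzRingType) (t1 t2 : R) :
  Smx 2 t1 t2 *m Smx 2 t1 t2 = (t1 * t2)%:M.
Proof.
apply/matrixP => i j; rewrite !mxE !big_ord_recl big_ord0 !mxE.
case: i => [[|[|//]] ?]; case: j => [[|[|//]] ?];
  by rewrite /= ?mulr0 ?mul0r ?addr0 ?add0r // mulrC.
Qed.

Lemma mulrDB_comm (A : pzRingType) (u v : A) :
  GRing.comm u v -> (u + v) * (u - v) = u ^+ 2 - v ^+ 2.
Proof. by move=> cuv; rewrite mulrDl !mulrBr cuv addrA subrK !expr2. Qed.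

Lemma sqrrD_comm (A : pzRingType) (u v : A) :
  GRing.comm u v -> (u + v) ^+ 2 = u ^+ 2 + v ^+ 2 + (u * v) *+ 2.
Proof.
move=> cuv; rewrite expr2 mulrDl !mulrDr -cuv -!expr2.
by rewrite mulr2n [u * v + _]addrC addrACA.
Qed.

Lemma prod_signed_sums_comm (R : comPzRingType) (A : algType R) (X Y Z : A)
    (x y z : R) :
  GRing.comm X Y -> GRing.comm X Z -> GRing.comm Y Z ->
  X ^+ 2 = x%:A -> Y ^+ 2 = y%:A -> Z ^+ 2 = z%:A ->
  (X + Y + Z) * (X + Y - Z) * ((X - Y + Z) * (X - Y - Z)) =
  ((x + y - z) ^+ 2 - 4%:R * x * y)%:A.
Proof.
move=> cXY cXZ cYZ hX hY hZ.
have cZX := commr_sym cXZ; have cZY := commr_sym cYZ.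
rewrite (mulrDB_comm (commr_sym (commrD cZX cZY))).
rewrite (mulrDB_comm (commr_sym (commrB cZX cZY))).
rewrite (sqrrD_comm cXY) (sqrrD_comm (commrN cXY)) sqrrN mulrN mulNrn hX hY hZ.
rewrite (addrAC _ (X * Y *+ 2)) (addrAC _ (- (X * Y *+ 2))).
rewrite -!in_algE -!(rmorphB, rmorphD) mulrDB_comm; last exact: comm_alg.
rewrite exprMn_n (exprMn_comm _ cXY) hX hY -!in_algE -rmorphM -rmorphMn.
by rewrite -rmorphXn -rmorphB /= -mulrA mulr_natl.
Qed.

(* Sixteen times the squared area of a triangle with sides x1, x2, x3 (Heron). *)
Definition heron (R : pzRingType) (x1 x2 x3 : R) : R :=
  (x1 + x2 + x3) * (x1 + x2 - x3) * (x1 - x2 + x3) * (x1 - x2 - x3).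

Lemma heron_sym_sum (R : comPzRingType) (x1 x2 x3 : R) :
  heron x1 x2 x3 = 2%:R * \sum_(x <- [:: x1; x2; x3]) x ^+ 4
                   - (\sum_(x <- [:: x1; x2; x3]) x ^+ 2) ^+ 2.
Proof. by rewrite /heron !big_cons !big_nil; ring. Qed.

Lemma heron_perm (R : comPzRingType) (x1 x2 x3 y1 y2 y3 : R) :
  perm_eq [:: x1; x2; x3] [:: y1; y2; y3] -> heron x1 x2 x3 = heron y1 y2 y3.
Proof. by move=> pxy; rewrite !heron_sym_sum !(perm_big _ pxy). Qed.

Lemma heron_same (R : comPzRingType) (x : R) : heron x x x = - (3%:R * x ^+ 4).
Proof. by rewrite /heron; ring. Qed.

Lemma heron_neq0 (R : idomainType) (x1 x2 x3 : R) :
  heron x1 x2 x3 != 0 <->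
  [/\ x3 <> x1 + x2, x3 <> - (x1 + x2), x3 <> x1 - x2 & x3 <> - (x1 - x2)].
Proof.
have E1 : x1 + x2 + x3 = x3 - (- (x1 + x2)) by ring.
have E2 : x1 + x2 - x3 = - (x3 - (x1 + x2)) by ring.
have E3 : x1 - x2 + x3 = x3 - (- (x1 - x2)) by ring.
have E4 : x1 - x2 - x3 = - (x3 - (x1 - x2)) by ring.
rewrite /heron E1 E2 E3 E4 !mulf_eq0 !oppr_eq0 !subr_eq0 !negb_or.
split=> [/andP[/andP[/andP[]]] | []] /eqP h1 /eqP h2 /eqP h3 /eqP h4 //.
by rewrite h1 h2 h3 h4.
Qed.

Lemma heron_double_neq0 (R : idomainType) (x y : R) :
  heron x x y != 0 <-> [/\ y != 0, y <> 2 * x & y <> - (2 * x)].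
Proof.
rewrite heron_neq0 subrr oppr0 mulr_natl mulr2n.
by split=> [[h1 h2 /eqP h3 _] | [/eqP h3 h1 h2]].
Qed.

Section TRN222.

Variables (F : fieldType) (a b c d e f : F).

Let I2 : 'M[F]_2 := 1%:M.
Let X : 'M[F]_(2 * (2 * 2)) := I2 *t (I2 *t Smx 2 c d).
Let Y : 'M[F]_(2 * (2 * 2)) := I2 *t (Smx 2 a b *t I2).
Let Z : 'M[F]_(2 * (2 * 2)) := Smx 2 f e *t (I2 *t I2).
Let Jy : 'M[F]_(2 * (2 * 2)) := I2 *t (sign_mx F 2 *t I2).
Let Jz : 'M[F]_(2 * (2 * 2)) := sign_mx F 2 *t (I2 *t I2).

Let commXY : GRing.comm X Y.
Proof. by rewrite /GRing.comm -mulmxE !tensmx_mul !mul1mx !mulmx1. Qed.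
Let commXZ : GRing.comm X Z.
Proof. by rewrite /GRing.comm -mulmxE !tensmx_mul !mul1mx !mulmx1. Qed.
Let commYZ : GRing.comm Y Z.
Proof. by rewrite /GRing.comm -mulmxE !tensmx_mul !mul1mx !mulmx1. Qed.

Let sqrX : X ^+ 2 = (c * d)%:A.
Proof.
by rewrite expr2 -mulmxE !tensmx_mul !mul1mx Smx2_sqr !scalar_tensmx !mul1r scalemx1.
Qed.
Let sqrY : Y ^+ 2 = (a * b)%:A.
Proof.
by rewrite expr2 -mulmxE !tensmx_mul !mul1mx Smx2_sqr !scalar_tensmx mul1r mulr1 scalemx1.
Qed.
Let sqrZ : Z ^+ 2 = (e * f)%:A.
Proof.
by rewrite expr2 -mulmxE !tensmx_mul !mul1mx Smx2_sqr !scalar_tensmx !mulr1 mulrC scalemx1.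
Qed.

Let conjJy : Jy *m (X + Y + Z) *m Jy = X - Y + Z.
Proof.
rewrite !(mulmxDl, mulmxDr) !tensmx_conj !mul1mx !mulmx1 sign_mx_sqr sign_mx_conj_Smx.
by rewrite tensmxNl tensmxNr.
Qed.

Let conjJz : Jz *m (X + Y + Z) *m Jz = X + Y - Z.
Proof.
rewrite !(mulmxDl, mulmxDr) !tensmx_conj !mul1mx !mulmx1 sign_mx_sqr sign_mx_conj_Smx.
by rewrite tensmxNl.
Qed.

Let conjJz' : Jz *m (X - Y + Z) *m Jz = X - Y - Z.
Proof.
rewrite !(mulmxDl, mulmxDr, mulmxN, mulNmx) !tensmx_conj !mul1mx !mulmx1.
rewrite sign_mx_sqr sign_mx_conj_Smx.
by rewrite tensmxNl.
Qed.

Let sqrJy : Jy *m Jy = 1%:M.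
Proof. by rewrite !tensmx_mul mul1mx sign_mx_sqr !scalar_tensmx !mulr1. Qed.
Let sqrJz : Jz *m Jz = 1%:M.
Proof. by rewrite !tensmx_mul mul1mx sign_mx_sqr !scalar_tensmx !mulr1. Qed.

Lemma TRN222_unitmx (lx ly lz : F) :
  lx ^+ 2 = c * d -> ly ^+ 2 = a * b -> lz ^+ 2 = e * f ->
  (TRN 2 2 2 a b c d e f \in unitmx) = (heron lx ly lz != 0).
Proof.
move=> hx hy hz; rewrite TRN_tensE -/I2 -/X -/Y -/Z.
have prodE : (X + Y + Z) *m ((X + Y - Z) *m ((X - Y + Z) *m (X - Y - Z)))
             = (heron lx ly lz)%:M.
  rewrite !mulmxE mulrA (prod_signed_sums_comm commXY commXZ commYZ sqrX sqrY sqrZ).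
  by rewrite -hx -hy -hz scalemx1 /heron; congr (_%:M); ring.
apply/idP/idP => [uT | hQ].
- have : ((heron lx ly lz)%:M : 'M[F]_(2 * (2 * 2))) \in unitmx.
    have [[uJy _] [uJz _]] := (mulmx1_unit sqrJy, mulmx1_unit sqrJz).
    by rewrite -prodE -conjJz' -conjJy -conjJz !unitmx_mul uT uJy uJz.
  by rewrite unitmxE det_scalar unitfE expf_eq0.
- have [] // := @mulmx1_unit _ _ (X + Y + Z)
    ((heron lx ly lz)^-1 *: ((X + Y - Z) *m ((X - Y + Z) *m (X - Y - Z)))).
  by rewrite -scalemxAr prodE scale_scalar_mx mulVf.
Qed.

End TRN222.

Lemma Fp_three_eq0 p : prime p -> ((3%:R : 'F_p) == 0) = (p == 3)%N.
Proof. by move=> hp; rewrite -(dvdn_pcharf (pchar_Fp hp)) dvdn_prime2. Qed.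

Lemma modF_val p (x : 'F_p) : prime p -> modF p (val x) = x.
Proof.
move=> hp; apply: val_inj; rewrite /= val_Fp_nat // modn_small //.
by rewrite -[p in (_ < p)%N](Fp_cast hp).
Qed.

Lemma modF_kfun_sqr p (t1 t2 : 'F_p) : prime p -> qrl t1 t2 ->
  modF p (kfun t1 t2) ^+ 2 = t1 * t2.
Proof.
move=> hp; rewrite /kfun; case: eqP => [-> _ | _ [//|[t ht]]].
  by rewrite modF_val // expr2.
have ex_root : has (fun k : nat => (k%:R : 'F_p) ^+ 2 == t1 * t2) (iota 0 p).
  apply/hasP; exists (val t); last by rewrite -/(modF p _) modF_val // ht.
  by rewrite mem_iota add0n leq0n -[p in (_ < p)%N](Fp_cast hp) ltn_ord.
have := nth_find 0%N ex_root; rewrite nth_iota ?add0n; first by move/eqP.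
by move: ex_root; rewrite has_find size_iota.
Qed.

Definition nondegenerate_labelling (p k1 k2 k3 : nat) : Prop :=
  [\/ (modF p k1 = modF p k2 /\ modF p k2 = modF p k3 /\ p <> 3%N),
      (modF p k1 = modF p k2 /\ modF p k1 <> modF p k3 /\
       modF p k3 <> 2 * modF p k1 /\ modF p k3 <> - (2 * modF p k1))
    | (modF p k1 <> modF p k2 /\ modF p k1 <> modF p k3 /\
       modF p k2 <> modF p k3 /\
       modF p k3 <> modF p k1 + modF p k2 /\
       modF p k3 <> - (modF p k1 + modF p k2) /\
       modF p k3 <> modF p k1 - modF p k2 /\
       modF p k3 <> - (modF p k1 - modF p k2))].

Lemma nondegenerate_labelling_heron p (k1 k2 k3 : nat) : prime p ->
  modF p k3 != 0 -> nondegenerate_labelling p k1 k2 k3 ->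
  heron (modF p k1) (modF p k2) (modF p k3) != 0.
Proof.
move=> hp nz3 [[-> [-> p3]] | [-> [_ [h2 h2N]]] | [_ [_ [_ h]]]].
- rewrite heron_same oppr_eq0 mulf_eq0 negb_or Fp_three_eq0 // expf_eq0 nz3.
  by rewrite andbT; apply/eqP.
- exact/heron_double_neq0.
- by apply/heron_neq0; case: h => [h1 [h2 [h3 h4]]].
Qed.

Lemma perm3_rot (T : eqType) (x y z : T) : perm_eq [:: y; z; x] [:: x; y; z].
Proof. by rewrite (perm_rot 1 [:: x; y; z]). Qed.

Lemma perm3_swap23 (T : eqType) (x y z : T) : perm_eq [:: x; z; y] [:: x; y; z].
Proof. by rewrite perm_cons (perm_rot 1 [:: y; z]). Qed.

Lemma heron_nondegenerate_labelling p (k1 k2 k3 : nat) : prime p ->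
  heron (modF p k1) (modF p k2) (modF p k3) != 0 ->
  exists l1 l2 l3 : nat, perm_eq [:: l1; l2; l3] [:: k1; k2; k3] /\
                         nondegenerate_labelling p l1 l2 l3.
Proof.
move=> hp H.
have H231 : heron (modF p k2) (modF p k3) (modF p k1) != 0.
  by rewrite (heron_perm (perm3_rot _ _ _)).
have H132 : heron (modF p k1) (modF p k3) (modF p k2) != 0.
  by rewrite (heron_perm (perm3_swap23 _ _ _)).
have double l1 l2 l3 : modF p l1 = modF p l2 -> modF p l1 != modF p l3 ->
    heron (modF p l1) (modF p l2) (modF p l3) != 0 ->
    nondegenerate_labelling p l1 l2 l3.
  move=> e12 n13; rewrite -e12 => /heron_double_neq0[_ h2 h2N].
  by apply: Or32; do !split=> //; apply/eqP.
case: (eqVneq (modF p k1) (modF p k2)) => [e12|n12];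
case: (eqVneq (modF p k2) (modF p k3)) => [e23|n23];
case: (eqVneq (modF p k1) (modF p k3)) => [e13|n13].
- exists k1, k2, k3; split=> //; apply: Or31; split=> //; split=> // p3.
  move: H; rewrite -e23 -e12 heron_same.
  have /eqP -> : (3%:R : 'F_p) == 0 by rewrite Fp_three_eq0 // p3.
  by rewrite mul0r oppr0 eqxx.
- by rewrite e12 e23 eqxx in n13.
- by rewrite -e12 e13 eqxx in n23.
- by exists k1, k2, k3; split=> //; apply: double.
- by rewrite e13 -e23 eqxx in n12.
- exists k2, k3, k1; split; first exact: perm3_rot.
  by apply: double => //; rewrite eq_sym.
- by exists k1, k3, k2; split; [exact: perm3_swap23 | apply: double].
- exists k1, k2, k3; split=> //; apply: Or33.
  by case/heron_neq0: H => h1 h2 h3 h4; do !split=> //; apply/eqP.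
Qed.

Unset Implicit Arguments.

Theorem corollary3p4 (p : nat) (hp : prime p) (hodd : odd p)
  (a b c d e f : 'F_p)
  (ha : a != 0) (hb : b != 0) (hc : c != 0) (hd : d != 0)
  (he : e != 0) (hf : f != 0)
  (hab : qrl a b) (hcd : qrl c d) (hef : qrl e f) :
  let ks := kfun a b in
  let kn := kfun c d in
  let km := kfun e f in
  (TRN 2 2 2 a b c d e f \in unitmx) <->
  exists k1 k2 k3 : nat,
    perm_eq [:: k1; k2; k3] [:: kn; ks; km] /\
    [\/ (modF p k1 = modF p k2 /\ modF p k2 = modF p k3 /\ p <> 3%N),
        (modF p k1 = modF p k2 /\ modF p k1 <> modF p k3 /\
         modF p k3 <> 2 * modF p k1 /\ modF p k3 <> - (2 * modF p k1))
      | (modF p k1 <> modF p k2 /\ modF p k1 <> modF p k3 /\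
         modF p k2 <> modF p k3 /\
         modF p k3 <> modF p k1 + modF p k2 /\
         modF p k3 <> - (modF p k1 + modF p k2) /\
         modF p k3 <> modF p k1 - modF p k2 /\
         modF p k3 <> - (modF p k1 - modF p k2))].
Proof.
move=> ks kn km.
have nz_root k (t1 t2 : 'F_p) :
    modF p k ^+ 2 = t1 * t2 -> t1 != 0 -> t2 != 0 -> modF p k != 0.
  by move=> hk ht1 ht2; rewrite -sqrf_eq0 hk mulf_neq0.
have hn := modF_kfun_sqr hp hcd; have hs := modF_kfun_sqr hp hab.
have hm := modF_kfun_sqr hp hef.
rewrite (TRN222_unitmx hn hs hm); split=> [|[l1 [l2 [l3 [pl hl]]]]].
  exact: heron_nondegenerate_labelling.
rewrite -(heron_perm (perm_map (modF p) pl)).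
apply: nondegenerate_labelling_heron hl => //.
have : l3 \in [:: kn; ks; km] by rewrite -(perm_mem pl) !inE eqxx !orbT.
rewrite !inE => /or3P[] /eqP ->.
- exact: nz_root hn hc hd.
- exact: nz_root hs ha hb.
- exact: nz_root hm he hf.
Qed.
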